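(* Let $1<d\le n$ be integers, let $C$ be a real symmetric $n\times n$ matrix with unit diagonal, and let $T_{n,d}=\{Y\in\mathbb{R}^{n\times d}: \|Y_i\|_2=1 \text{ for every row } Y_i\}$. For $Y\in T_{n,d}$ set $\psi=YY^T-C$ and $F_Y=2\psi Y$. Suppose $Y\in T_{n,d}$ satisfies \[ F_Y-\operatorname{diag}(F_YY^T)\,Y=0. \] Define the diagonal matrix $\lambda=\tfrac12\operatorname{diag}(F_YY^T)$ and $C(\lambda)=C+\lambda$. Then there exist an orthogonal matrix $Q$ and a diagonal matrix $D$ with \[ C(\lambda)=QDQ^T,\qquad YY^T=QD^*Q^T, \] where $D^*$ is a diagonal matrix obtained from $D$ by selecting at most $d$ nonnegative diagonal entries of $D$ (each selected entry keeping its position) and setting all other entries to zero.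
   Context: For a square matrix $A$, $\operatorname{diag}(A)$ denotes the diagonal matrix with the same diagonal as $A$, i.e. $\operatorname{diag}(A)_{ij}=\delta_{ij}A_{ij}$. The quantity $F_Y-\operatorname{diag}(F_YY^T)Y$ is the gradient on $T_{n,d}$ (with the Frobenius metric) of $F(Y)=\tfrac12\|YY^T-C\|_F^2$, whose Euclidean differential is $F_Y$. *)

From mathcomp Require Import all_boot all_order all_algebra.
From mathcomp Require Import reals.
Set Implicit Arguments. Unset Strict Implicit. Unset Printing Implicit Defensive.
Import Order.TTheory GRing.Theory Num.Theory.
Local Open Scope ring_scope.

Definition diagm (R : pzRingType) (n : nat) (A : 'M[R]_n) : 'M[R]_n :=
  diag_mx (\row_i A i i).

Definition in_T (R : realType) (n d : nat) (Y : 'M[R]_(n, d)) : Prop :=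
  forall i : 'I_n, \sum_(j < d) Y i j ^+ 2 = 1.

Definition orthogonal_mx (R : pzRingType) (n : nat) (Q : 'M[R]_n) : Prop :=
  Q *m Q^T = 1%:M.

Definition FY (R : realType) (n d : nat) (C : 'M[R]_n) (Y : 'M[R]_(n, d)) : 'M[R]_(n, d) :=
  2%:R *: ((Y *m Y^T - C) *m Y).

From mathcomp Require Import all_boot all_order all_algebra.
From mathcomp Require Import reals.
From mathcomp Require Import complex spectral.
From mathcomp Require Import ring.
Import Order.TTheory GRing.Theory Num.Theory.
Local Open Scope ring_scope.

(* Set P = Y Y^T and M = C + lambda.  The stationarity condition says exactly
   M Y = P Y, hence M P = P P; transposing gives P M = P P, so the symmetric
   matrices M and P commute and are diagonalised by one orthogonal Q, say
   M = Q diag(D) Q^T and P = Q diag(E) Q^T.  Then D E = E E, so E agrees with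
   D on its support S and vanishes elsewhere; E >= 0 because P is a Gram
   matrix, and #|S| = rank P <= d.  The simultaneous diagonalisation is by
   induction on n: commuting real symmetric matrices share a complex
   eigenvector with real eigenvalues, hence a real one, and an orthogonal
   matrix with that vector as first row splits both into blocks.  Neither the
   unit diagonal of C nor the unit rows of Y plays any role. *)

Set Implicit Arguments. Unset Strict Implicit. Unset Printing Implicit Defensive.

Section RealSymmetric.
Variable R : realType.
Local Notation toC := (real_complex R).
Local Notation Re := (@complex.Re R).
Local Notation Im := (@complex.Im R).

Lemma mulmx_tr_self_eq0 n (v : 'rV[R]_n) : v *m v^T = 0 -> v = 0.
Proof.
move=> /matrixP /(_ 0 0); rewrite !mxE => vv0.
have /psumr_eq0P v2_0 : \sum_j v 0 j ^+ 2 = 0.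
  by apply: etrans vv0; apply: eq_bigr => j _; rewrite mxE expr2.
apply/rowP => j; rewrite mxE; apply/eqP.
by rewrite -sqrf_eq0 v2_0 // => i _; exact: sqr_ge0.
Qed.

Lemma mulmx_tr_diag_ge0 m n (Z : 'M[R]_(m, n)) i : 0 <= (Z *m Z^T) i i.
Proof. by rewrite mxE; apply: sumr_ge0 => k _; rewrite mxE -expr2 sqr_ge0. Qed.

(* As A is real symmetric, z <w, w> = <w A, w> = conj z <w, w>. *)
Lemma symmetric_eigenvalue_real n (A : 'M[R]_n) (w : 'rV[R[i]]_n) z :
  A^T = A -> w != 0 -> w *m map_mx toC A = z *: w -> Im z = 0.
Proof.
move=> AT w0 wA.
have wA_j j : \sum_i w 0 i * toC (A i j) = z * w 0 j.
  by move/rowP: wA => /(_ j); rewrite !mxE => <-; apply: eq_bigr => i _; rewrite mxE.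
have wA_conj j : \sum_i conjc (w 0 i) * toC (A j i) = conjc z * conjc (w 0 j).
  have := congr1 conjc (wA_j j); rewrite rmorph_sum rmorphM => <-.
  by apply: eq_bigr => i _; rewrite rmorphM -{1}AT mxE /= oppr0.
pose s := \sum_j w 0 j * conjc (w 0 j).
have s_neq0 : s != 0.
  apply: contra w0 => /eqP s0; apply/eqP/rowP => j; rewrite mxE.
  have /psumr_eq0P norm0 : \sum_j `|w 0 j| ^+ 2 = 0.
    by apply: etrans s0; apply: eq_bigr => k _; rewrite normCK.
  by apply/eqP; rewrite -normr_eq0 -sqrf_eq0 norm0 // => k _; exact: exprn_ge0.
pose q := \sum_j \sum_i w 0 i * toC (A i j) * conjc (w 0 j).
have q_z : q = z * s.
  by rewrite /s mulr_sumr; apply: eq_bigr => j _; rewrite -mulr_suml wA_j mulrA.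
have q_conjz : q = conjc z * s.
  rewrite /q exchange_big /s mulr_sumr; apply: eq_bigr => i _.
  rewrite mulrCA -wA_conj mulr_sumr; apply: eq_bigr => j _.
  by rewrite -mulrA [_ * conjc _]mulrC.
have : z = conjc z by apply: (mulIf s_neq0); rewrite -q_z -q_conjz.
case: z {wA wA_j wA_conj q_z q_conjz} => a b /= [] /eqP.
by rewrite -subr_eq0 opprK -mulr2n mulrn_eq0 /= => /eqP.
Qed.

Lemma Re_eigenvector n (A : 'M[R]_n) (w : 'rV[R[i]]_n) z :
  w *m map_mx toC A = z *: w -> Im z = 0 ->
  map_mx Re w *m A = Re z *: map_mx Re w.
Proof.
move=> /rowP wA z_real; apply/rowP => j; rewrite !mxE.
move: (wA j); rewrite !mxE => /(congr1 Re).
have -> : Re (z * w 0 j) = Re z * Re (w 0 j).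
  by case: z {wA} z_real => a b /= ->; case: (w 0 j) => c e /=; rewrite mul0r subr0.
move=> <-; rewrite (raddf_sum (Re : Rcomplex R -> R)).
by apply: eq_bigr => i _; rewrite !mxE; case: (w 0 i) => a b /=; rewrite mulr0 subr0.
Qed.

Lemma common_real_eigenvector n (A B : 'M[R]_n.+1) :
  A^T = A -> B^T = B -> A *m B = B *m A ->
  exists (v : 'rV[R]_n.+1) a b, [/\ v != 0, v *m A = a *: v & v *m B = b *: v].
Proof.
move=> AT BT AB.
have AB_C : map_mx toC A *m map_mx toC B = map_mx toC B *m map_mx toC A.
  by rewrite -!map_mxM AB.
have [w w0 /andP[stA stB]] := common_eigenvector2 (ltn0Sn n) AB_C.
have [za /eigenspaceP wA] := eigenvectorP _ stA.
have [zb /eigenspaceP wB] := eigenvectorP _ stB.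
have za_real := symmetric_eigenvalue_real AT w0 wA.
have zb_real := symmetric_eigenvalue_real BT w0 wB.
suff [w' [w'A w'B w'0]] : exists w' : 'rV_n.+1,
    [/\ w' *m map_mx toC A = za *: w', w' *m map_mx toC B = zb *: w'
      & map_mx Re w' != 0].
  by exists (map_mx Re w'), (Re za), (Re zb);
     split => //; exact: Re_eigenvector.
have [Re_w0|] := eqVneq (map_mx Re w) 0; last by exists w.
(* the real part of [w] vanishes, so that of ['i w] is [- Im w] *)
exists ('i *: w); rewrite -!scalemxAl wA wB !scalerA ![_ * 'i]mulrC; split => //.
apply: contra w0 => /eqP/rowP Im_w0; apply/eqP/rowP => j.
move/rowP: Re_w0 => /(_ j); move: (Im_w0 j); rewrite !mxE.
by case: (w 0 j) => a b /= /eqP; rewrite mul0r sub0r mul1r oppr_eq0 => /eqP -> ->.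
Qed.

Lemma orthogonal_mx_trC n (Q : 'M[R]_n) : orthogonal_mx Q -> Q^T *m Q = 1%:M.
Proof. exact: mulmx1C. Qed.

Lemma orthogonal_mx_tr n (Q : 'M[R]_n) : orthogonal_mx Q -> orthogonal_mx Q^T.
Proof. by move=> /orthogonal_mx_trC; rewrite /orthogonal_mx trmxK. Qed.

Lemma orthogonal_mx_mul n (P Q : 'M[R]_n) :
  orthogonal_mx P -> orthogonal_mx Q -> orthogonal_mx (P *m Q).
Proof.
rewrite /orthogonal_mx => PP QQ.
by rewrite trmx_mul mulmxA -(mulmxA P) QQ mulmx1.
Qed.

Lemma orthogonal_mx_block1 n (Q : 'M[R]_n) :
  orthogonal_mx Q -> orthogonal_mx (block_mx 1%:M 0 0 Q : 'M_(1 + n)).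
Proof.
rewrite /orthogonal_mx tr_block_mx mulmx_block !trmx0 trmx1 => ->.
by rewrite !mulmx0 !mul0mx !mulmx1 !addr0 !add0r -scalar_mx_block.
Qed.

Lemma orthogonal_conjK n (Q X : 'M[R]_n) :
  orthogonal_mx Q -> X = Q *m (Q^T *m X *m Q) *m Q^T.
Proof. by move=> QQ; rewrite !mulmxA QQ mul1mx -mulmxA QQ mulmx1. Qed.

(* Householder reflection along [u - e_0]. *)
Lemma orthogonal_completion n (u : 'rV[R]_n.+1) :
  u *m u^T = 1%:M -> exists H : 'M[R]_n.+1, orthogonal_mx H /\ row 0 H = u.
Proof.
move=> uu; pose e := delta_mx 0 (0 : 'I_n.+1) : 'rV[R]_n.+1.
pose a := u 0 0.
have eu : e *m u^T = a%:M.
  by rewrite -rowE; apply/rowP => i; rewrite ord1 !mxE eqxx mulr1n.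
have ue : u *m e^T = a%:M by rewrite -[u]trmxK -trmx_mul eu tr_scalar_mx.
have ee : e *m e^T = 1%:M.
  by rewrite -rowE; apply/rowP => i; rewrite ord1 !mxE eqxx.
pose w := u - e.
have ww : w *m w^T = (2 - 2 * a)%:M.
  rewrite /w linearB /= mulmxBl !mulmxBr uu ue eu ee.
  by apply/rowP => i; rewrite ord1 !mxE eqxx /=; ring.
have wE : w = u - e by [].
clearbody w.
have [a1|a_neq1] := eqVneq a 1.
  exists 1%:M; split; first by rewrite /orthogonal_mx trmx1 mulmx1.
  rewrite row1; apply/eqP; rewrite eq_sym -subr_eq0; apply/eqP/mulmx_tr_self_eq0.
  by rewrite -wE ww a1; apply/rowP => i; rewrite ord1 !mxE eqxx /=; ring.
pose c := (1 - a)^-1.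
have ca : c * (1 - a) = 1 by rewrite mulVf // subr_eq0 eq_sym.
pose H := 1%:M - c *: (w^T *m w).
have HT : H^T = H by rewrite /H linearB /= linearZ /= trmx_mul trmxK trmx1.
exists H; split.
  rewrite /orthogonal_mx HT /H mulmxBl !mulmxBr mul1mx mulmx1 -!scalemxAl -!scalemxAr.
  rewrite !mulmxA -[w^T *m w *m w^T]mulmxA ww mul_mx_scalar -!scalemxAl !scalerA.
  have -> : c * (c * (2 - 2 * a)) = c + c.
    have -> : 2 - 2 * a = (1 - a) *+ 2 by ring.
    by rewrite !mulrnAr ca mulr1.
  by rewrite scalerDl opprB mul1mx; set W := c *: _; rewrite addrK subrK.
rewrite rowE /H mulmxBr mulmx1 -scalemxAr mulmxA.
have -> : delta_mx 0 0 *m w^T = (a - 1)%:M.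
  by rewrite wE linearB /= mulmxBr -/e eu ee; apply/rowP => i; rewrite ord1 !mxE eqxx.
rewrite mul_scalar_mx scalerA.
have -> : c * (a - 1) = -1 by rewrite -opprB mulrN ca.
by rewrite scaleN1r opprK wE addrC subrK.
Qed.

Lemma eigenrow_conj_block n (H A : 'M[R]_(1 + n)) a :
  orthogonal_mx H -> A^T = A -> row 0 H *m A = a *: row 0 H ->
  exists2 A' : 'M_n, A'^T = A' & H *m A *m H^T = block_mx a%:M 0 0 A'.
Proof.
move=> HH AT rA; set A1 := H *m A *m H^T.
have A1T : A1^T = A1 by rewrite /A1 !trmx_mul trmxK AT mulmxA.
have /rowP row0 : row 0 A1 = a *: row 0 1%:M.
  by rewrite /A1 !row_mul rA -scalemxAl -row_mul HH.
clearbody A1.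
have A1_0 j : A1 0 j = a *+ (j == 0).
  by move: (row0 j); rewrite !mxE eq_sym mulr_natr.
have lshift0 (i : 'I_1) : lshift n i = 0 by apply/val_inj; rewrite /= (ord1 i).
have ur : ursubmx A1 = 0.
  by apply/matrixP => i j; rewrite !mxE lshift0 A1_0.
have ul : ulsubmx A1 = a%:M.
  by apply/matrixP => i j; rewrite !mxE !lshift0 A1_0 (ord1 i) (ord1 j).
exists (drsubmx A1); first by rewrite trmx_drsub A1T.
have dl : dlsubmx A1 = 0 by rewrite -A1T -trmx_ursub ur trmx0.
by rewrite -{1}[A1]submxK ur ul dl.
Qed.

Lemma row_normalizable n (v : 'rV[R]_n) :
  v != 0 -> exists k : R, (k *: v) *m (k *: v)^T = 1%:M.
Proof.
move=> v0; pose s := (v *m v^T) 0 0.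
have s_ge0 : 0 <= s by apply: mulmx_tr_diag_ge0.
have s_neq0 : s != 0.
  apply: contra v0 => /eqP s0; apply/eqP/mulmx_tr_self_eq0.
  by apply/rowP => i; rewrite ord1 -/s s0 mxE.
exists (Num.sqrt s)^-1; rewrite linearZ /= -scalemxAl -scalemxAr scalerA.
apply/rowP => i; rewrite ord1 [LHS]mxE -/s !mxE eqxx mulr1n.
by rewrite -expr2 exprVn sqr_sqrtr // mulVf.
Qed.

Lemma is_diag_conj_block1 n a (A' Q' : 'M[R]_n) :
  is_diag_mx (Q'^T *m A' *m Q') ->
  is_diag_mx ((block_mx 1%:M 0 0 Q')^T *m block_mx a%:M 0 0 A' *m block_mx 1%:M 0 0 Q'
              : 'M_(1 + n)).
Proof.
move=> dA'; rewrite tr_block_mx !mulmx_block !trmx0 trmx1.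
rewrite !mulmx0 !mulmx1 !mul1mx !addr0 !add0r !mul0mx.
by rewrite (@is_diag_block_mx _ 1 n 1 n) // mx11_is_diag !eqxx.
Qed.

Theorem symmetric_commuting_codiagonalizable n (A B : 'M[R]_n) :
  A^T = A -> B^T = B -> A *m B = B *m A ->
  exists Q : 'M[R]_n,
    [/\ orthogonal_mx Q, is_diag_mx (Q^T *m A *m Q) & is_diag_mx (Q^T *m B *m Q)].
Proof.
elim: n A B => [|n IH] A B AT BT AB.
  by exists 1%:M; split; [rewrite /orthogonal_mx trmx1 mulmx1 | apply/is_diag_mxP => -[]..].
have [v [a [b [v0 vA vB]]]] := common_real_eigenvector AT BT AB.
have [H [HH HA HB]] : exists H : 'M[R]_n.+1, [/\ orthogonal_mx H,
    row 0 H *m A = a *: row 0 H & row 0 H *m B = b *: row 0 H].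
  have [k /orthogonal_completion [H [HH H0]]] := row_normalizable v0.
  by exists H; rewrite H0 -!scalemxAl vA vB !scalerA mulrC [_ * b]mulrC.
have [A' A'T HAH] := eigenrow_conj_block HH AT HA.
have [B' B'T HBH] := eigenrow_conj_block HH BT HB.
have A'B' : A' *m B' = B' *m A'.
  have HtH := orthogonal_mx_trC HH.
  have : block_mx a%:M 0 0 A' *m block_mx b%:M 0 0 B'
         = block_mx b%:M 0 0 B' *m block_mx a%:M 0 0 A' :> 'M_(1 + n).
    rewrite -HAH -HBH !mulmxA -!(mulmxA _ H^T H) HtH !mulmx1.
    by rewrite -!(mulmxA H A) -!(mulmxA H B) AB.
  rewrite !mulmx_block => /(congr1 drsubmx).
  by rewrite !block_mxKdr !mul0mx !add0r.
have [Q' [Q'Q' dA' dB']] := IH _ _ A'T B'T A'B'.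
pose K := block_mx 1%:M 0 0 Q' : 'M_(1 + n).
have conjHK X : (H^T *m K)^T *m X *m (H^T *m K) = K^T *m (H *m X *m H^T) *m K.
  by rewrite trmx_mul trmxK !mulmxA.
exists (H^T *m K); split.
- exact: orthogonal_mx_mul (orthogonal_mx_tr HH) (orthogonal_mx_block1 Q'Q').
- by rewrite conjHK HAH is_diag_conj_block1.
- by rewrite conjHK HBH is_diag_conj_block1.
Qed.

End RealSymmetric.

Section GramSpectral.
Variable R : realType.

Lemma card_support_le_rank n (E : 'rV[R]_n) (S : {set 'I_n}) :
  (forall i, i \in S -> E 0 i != 0) -> (#|S| <= \rank (diag_mx E))%N.
Proof.
move=> S_supp; pose s (k : 'I_#|S|) := enum_val k.
have Es_neq0 k : E 0 (s k) != 0 by apply/S_supp/enum_valP.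
pose G := rowsub s (diag_mx E).
(* [G] has the explicit right inverse [K], so it has full row rank #|S|. *)
pose K := \matrix_(j < n, k < #|S|) ((j == s k)%:R / E 0 j).
have GK : G *m K = 1%:M.
  apply/matrixP => k l; rewrite !mxE (bigD1 (s k)) //= big1; last first.
    by move=> j /negPf jk; rewrite !mxE eq_sym jk mulr0n mul0r.
  rewrite !mxE eqxx mulr1n addr0 mulrCA mulfV // mulr1.
  by rewrite (inj_eq enum_val_inj).
apply: (@leq_trans (\rank G)).
  by rewrite -{1}(mxrank1 R #|S|) -GK mxrankM_maxl.
by rewrite /G rowsubE mxrankM_maxr.
Qed.

Lemma diag_mx_mul_sq_support n (D E : 'rV[R]_n) i :
  diag_mx D *m diag_mx E = diag_mx E *m diag_mx E -> E 0 i != 0 -> D 0 i = E 0 i.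
Proof.
move=> /matrixP /(_ i i) DE_ii Ei_neq0; apply: (mulIf Ei_neq0).
by move: DE_ii; rewrite !mul_diag_mx !mxE eqxx !mulr1n.
Qed.

Theorem gram_spectral_selection n d (M : 'M[R]_n) (Y : 'M[R]_(n, d)) :
  M^T = M -> M *m Y = Y *m Y^T *m Y ->
  exists (Q : 'M[R]_n) (D : 'rV[R]_n) (S : {set 'I_n}),
    [/\ orthogonal_mx Q,
        M = Q *m diag_mx D *m Q^T,
        (#|S| <= d)%N,
        (forall i, i \in S -> 0 <= D 0 i) &
        Y *m Y^T = Q *m diag_mx (\row_i (if i \in S then D 0 i else 0)) *m Q^T].
Proof.
move=> MT MY; set P := Y *m Y^T.
have PT : P^T = P by rewrite /P trmx_mul trmxK.
have MP : M *m P = P *m P by rewrite /P !mulmxA MY.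
have PM : P *m M = P *m P by rewrite -[P *m M]trmxK trmx_mul MT PT MP trmx_mul PT.
have PE : P = Y *m Y^T by [].
clearbody P.
have [Q [QQ /diag_mxP[D DE] /diag_mxP[E EE]]] :=
  symmetric_commuting_codiagonalizable MT PT (etrans MP (esym PM)).
have DEE : diag_mx D *m diag_mx E = diag_mx E *m diag_mx E.
  rewrite -DE -EE !mulmxA -!(mulmxA _ Q Q^T) QQ !mulmx1.
  by rewrite -(mulmxA _ M P) MP mulmxA.
have QPQ : Q^T *m P *m Q = (Q^T *m Y) *m (Q^T *m Y)^T.
  by rewrite PE trmx_mul trmxK !mulmxA.
have E_ge0 i : 0 <= E 0 i.
  by move: (mulmx_tr_diag_ge0 (Q^T *m Y) i); rewrite -QPQ EE mxE eqxx mulr1n.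
exists Q, D, [set i : 'I_n | E 0 i != 0]; split => //.
- by rewrite {1}(orthogonal_conjK M QQ) DE.
- have supp i : i \in [set i | E 0 i != 0] -> E 0 i != 0 by rewrite inE.
  rewrite (leq_trans (card_support_le_rank supp)) // -EE QPQ.
  exact: leq_trans (mxrankM_maxl _ _) (rank_leq_col _).
- by move=> i; rewrite inE => Ei_neq0; rewrite (diag_mx_mul_sq_support DEE).
rewrite {1}(orthogonal_conjK P QQ) EE; congr (_ *m diag_mx _ *m _).
apply/rowP => i; rewrite !mxE inE.
by have [->|/(diag_mx_mul_sq_support DEE)->] := eqVneq (E 0 i) 0.
Qed.

End GramSpectral.

Lemma stationary_fixed_point (R : realType) n d (C : 'M[R]_n) (Y : 'M[R]_(n, d)) :
  FY C Y - diagm (FY C Y *m Y^T) *m Y = 0 ->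
  (C + 2%:R^-1 *: diagm (FY C Y *m Y^T)) *m Y = Y *m Y^T *m Y.
Proof.
move=> /eqP; rewrite subr_eq0 => /eqP FY_eq.
rewrite mulmxDl -scalemxAl -FY_eq /FY scalerA mulVf ?pnatr_eq0 // scale1r.
by rewrite mulmxBl addrC subrK.
Qed.

Theorem lemma6p1 (R : realType) (n d : nat) (C : 'M[R]_n) (Y : 'M[R]_(n, d)) :
  (1 < d)%N -> (d <= n)%N ->
  C^T = C -> (forall i : 'I_n, C i i = 1) ->
  in_T Y ->
  FY C Y - diagm (FY C Y *m Y^T) *m Y = 0 ->
  let lambda := 2%:R^-1 *: diagm (FY C Y *m Y^T) in
  exists (Q : 'M[R]_n) (D : 'rV[R]_n) (S : {set 'I_n}),
    [/\ orthogonal_mx Q,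
        C + lambda = Q *m diag_mx D *m Q^T,
        (#|S| <= d)%N,
        (forall i, i \in S -> 0 <= D 0 i) &
        Y *m Y^T = Q *m diag_mx (\row_i (if i \in S then D 0 i else 0)) *m Q^T].
Proof.
move=> _ _ CT _ _ stationary lambda.
apply: gram_spectral_selection; last exact: stationary_fixed_point stationary.
by rewrite linearD /= CT linearZ /= /diagm tr_diag_mx.
Qed.
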